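(* Assume the $abc$-conjecture. Then there is an absolute constant $C>0$ such that for every real $x > C$ and every real $y$ with $1 \le y \le x^{0.2}$, there do not exist squarefull integers $n_1<n_2<n_3$ in the interval $(x, x+y]$ with $n_1+n_3 = 2n_2$ (i.e. the squarefull numbers in $(x,x+y]$ contain no non-trivial three-term arithmetic progression).
   Context: A positive integer $n$ is squarefull if every prime $p$ dividing $n$ satisfies $p^2\mid n$. For a nonzero integer $m$, $\kappa(m)=\prod_{p\mid m} p$. The $abc$-conjecture is the statement: for every $\epsilon>0$ there is a constant $C_\epsilon>0$ such that for all integers $a,b,c$ with $a+b=c$ and $\gcd(a,b)=1$, one has $\max\{|a|,|b|,|c|\} \le C_\epsilon\, \kappa(abc)^{1+\epsilon}$. *)

From Stdlib Require Import ZArith Znumtheory Reals List.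
Open Scope Z_scope.

Definition Zprimeb (p : Z) : bool := if prime_dec p then true else false.

(* kappa(m) = product of the (positive) primes dividing m. Intended for m <> 0. *)
Definition kappa (m : Z) : Z :=
  fold_right Z.mul 1
    (filter (fun p => andb (Zprimeb p) (Z.rem m p =? 0))
            (map Z.of_nat (seq 0 (S (Z.abs_nat m))))).

Definition squarefull (n : Z) : Prop :=
  0 < n /\ forall p : Z, prime p -> (p | n) -> (p * p | n).

Definition abc_conjecture : Prop :=
  forall eps : R, (0 < eps)%R ->
    exists C : R, (0 < C)%R /\
      forall a b c : Z, a + b = c -> Z.gcd a b = 1 -> a * b * c <> 0 ->
        (IZR (Z.max (Z.abs a) (Z.max (Z.abs b) (Z.abs c)))
           <= C * Rpower (IZR (kappa (a * b * c))) (1 + eps))%R.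

(* Write the progression as n1 = h m1, n2 = h (m1 + e), n3 = h (m1 + 2e) with m1, m1 + e coprime;
   then m1 (m1 + 2e) + e^2 = (m1 + e)^2 is a coprime abc triple.  Every prime of its radical K
   divides some ni or e, and squarefullness puts its square into n1 n2 n3 e^2, so
   K^2 <= n1 n2 n3 e^2 <= (2x)^3 e^2.  abc with exponent 21/20 bounds (m1 + e)^2 by C0 K^(21/20);
   combined with x < h (m1 + e) and 2 h e = n3 - n1 < y <= x^(1/5), this gives x^(1/40) < C0. *)
From Stdlib Require Import ZArith Znumtheory Reals List FinFun Lia Lra.
Open Scope Z_scope.

Lemma rel_prime_add_mul a b k : rel_prime a b -> rel_prime (a + k * b) b.
Proof.
  intros Hab. apply rel_prime_bezout in Hab as [u v Huv].
  apply bezout_rel_prime. apply (Bezout_intro _ _ _ u (v - u * k)). lia.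
Qed.

Lemma rel_prime_mul_divide a b N : (a | N) -> (b | N) -> rel_prime a b -> (a * b | N).
Proof.
  intros [k ->] Hb Hab.
  assert (Hbk : (b | k)) by (apply Gauss with a; [rewrite Z.mul_comm | apply rel_prime_sym]; auto).
  destruct Hbk as [j ->]. exists j; ring.
Qed.

Lemma rel_prime_mul_sq a b c : rel_prime a c -> rel_prime b c -> rel_prime (a * b) (c * c).
Proof.
  intros Hac Hbc. apply rel_prime_sym, rel_prime_mult;
    apply rel_prime_sym, rel_prime_mult; auto using rel_prime_sym.
Qed.

Lemma rel_prime_prod p l : prime p -> ~ In p l -> (forall q, In q l -> prime q) ->
  rel_prime p (fold_right Z.mul 1 l).
Proof.
  intros Hp. induction l as [|a l IH]; simpl; intros Hnin Hl.
  - apply rel_prime_sym, rel_prime_1.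
  - apply rel_prime_mult; [|apply IH; auto].
    apply prime_rel_prime; auto. intros Hpa.
    apply Hnin; left; symmetry; apply prime_div_prime; auto.
Qed.

Lemma prod_primes_sq_divide l N : NoDup l -> (forall q, In q l -> prime q /\ (q * q | N)) ->
  (fold_right Z.mul 1 l * fold_right Z.mul 1 l | N).
Proof.
  induction l as [|p l IH]; simpl; intros Hnd Hl.
  - apply Z.divide_1_l.
  - inversion Hnd as [|? ? Hnin Hnd']; subst.
    destruct (Hl p (or_introl eq_refl)) as [Hp Hpp].
    set (P := fold_right Z.mul 1 l).
    assert (HPP : (P * P | N)) by (apply IH; auto).
    assert (HpP : rel_prime p P).
    { apply rel_prime_prod; auto. intros q Hq; apply (Hl q (or_intror Hq)). }
    replace (p * P * (p * P)) with ((p * p) * (P * P)) by ring.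
    apply rel_prime_mul_divide, rel_prime_mul_sq; auto.
Qed.

Lemma in_kappa_factors m q :
  In q (filter (fun p => andb (Zprimeb p) (Z.rem m p =? 0))
               (map Z.of_nat (seq 0 (S (Z.abs_nat m))))) ->
  prime q /\ (q | m).
Proof.
  intros Hq. apply filter_In in Hq as [_ Hf].
  unfold Zprimeb in Hf. destruct (prime_dec q) as [Hp|]; [|discriminate].
  apply Z.eqb_eq in Hf. split; auto.
  apply Z.rem_divide; auto. pose proof (prime_ge_2 q Hp); lia.
Qed.

Lemma kappa_ge1 m : 1 <= kappa m.
Proof.
  unfold kappa. pose proof (in_kappa_factors m) as Hin. revert Hin.
  generalize (filter (fun p => andb (Zprimeb p) (Z.rem m p =? 0))
                     (map Z.of_nat (seq 0 (S (Z.abs_nat m))))).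
  induction l as [|a l IH]; simpl; intros Hin; [lia|].
  pose proof (prime_ge_2 a (proj1 (Hin a (or_introl eq_refl)))).
  assert (1 <= fold_right Z.mul 1 l) by (apply IH; auto). nia.
Qed.

Lemma kappa_sq_divide m N : (forall p, prime p -> (p | m) -> (p * p | N)) ->
  (kappa m * kappa m | N).
Proof.
  intros HN. apply prod_primes_sq_divide.
  - apply NoDup_filter, Injective_map_NoDup; [intros a b; lia | apply seq_NoDup].
  - intros q Hq. destruct (in_kappa_factors m q Hq). auto.
Qed.

Lemma ap_coprime_decomposition n1 n2 n3 : 0 < n1 -> n1 < n2 -> n1 + n3 = 2 * n2 ->
  exists h m1 e, 1 <= h /\ 1 <= m1 /\ 1 <= e /\
    n1 = h * m1 /\ n2 = h * (m1 + e) /\ n3 = h * (m1 + e + e) /\ rel_prime m1 (m1 + e).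
Proof.
  intros Hn1 H12 Hsum.
  set (h := Z.gcd n1 n2).
  assert (Hh : 0 < h).
  { assert (h <> 0) by (intros E; apply Z.gcd_eq_0 in E; lia).
    pose proof (Z.gcd_nonneg n1 n2). lia. }
  destruct (Z.gcd_divide_l n1 n2) as [m1 Hm1].
  destruct (Z.gcd_divide_r n1 n2) as [m2 Hm2].
  fold h in Hm1, Hm2.
  assert (Hcop : Z.gcd m1 m2 = 1).
  { pose proof (Z.gcd_div_gcd n1 n2 h ltac:(lia) eq_refl) as G.
    rewrite Hm1, Hm2 in G at 1. rewrite !Z.div_mul in G by lia. exact G. }
  exists h, m1, (m2 - m1).
  replace (m1 + (m2 - m1)) with m2 by ring.
  assert (rel_prime m1 m2) by (apply Zgcd_1_rel_prime; auto).
  repeat (split; [nia|]). auto.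
Qed.

Lemma ap_abc_coprime m1 e : rel_prime m1 (m1 + e) -> Z.gcd (m1 * (m1 + e + e)) (e * e) = 1.
Proof.
  intros H12.
  assert (He1 : rel_prime e m1).
  { replace e with ((m1 + e) + (-1) * m1) by ring.
    apply rel_prime_add_mul, rel_prime_sym; auto. }
  assert (H3e : rel_prime (m1 + 2 * e) e) by (apply rel_prime_add_mul, rel_prime_sym; auto).
  replace (m1 + e + e) with (m1 + 2 * e) by ring.
  apply Zgcd_1_rel_prime, rel_prime_mul_sq; auto using rel_prime_sym.
Qed.

Lemma squarefull_ap_kappa_sq_divide h m1 m2 m3 e :
  squarefull (h * m1) -> squarefull (h * m2) -> squarefull (h * m3) ->
  (kappa (m1 * m3 * (e * e) * (m2 * m2)) * kappa (m1 * m3 * (e * e) * (m2 * m2))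
     | h * m1 * (h * m2) * (h * m3) * (e * e)).
Proof.
  intros S1 S2 S3. apply kappa_sq_divide. intros p Hp Hpm.
  assert (Hsf : forall m, squarefull (h * m) -> (p | m) -> (p * p | h * m)).
  { intros m [_ Hm] Hpm'. apply Hm, Z.divide_mul_r; auto. }
  assert (Hcases : (p | m1) \/ (p | m3) \/ (p | e) \/ (p | m2)).
  { repeat (apply prime_mult in Hpm as [Hpm|Hpm]; auto). }
  destruct Hcases as [H|[H|[H|H]]].
  - apply Z.divide_mul_l, Z.divide_mul_l, Z.divide_mul_l; auto.
  - apply Z.divide_mul_l, Z.divide_mul_r; auto.
  - apply Z.divide_mul_r. destruct H as [k ->]. exists (k * k); ring.
  - apply Z.divide_mul_l, Z.divide_mul_l, Z.divide_mul_r; auto.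
Qed.

Open Scope R_scope.

Lemma ln_le x y : 0 < x -> x <= y -> ln x <= ln y.
Proof.
  intros Hx Hxy. destruct (Rle_lt_or_eq_dec _ _ Hxy) as [Hlt|<-]; [|lra].
  left; apply ln_increasing; auto.
Qed.

Lemma ln_ge0 x : 1 <= x -> 0 <= ln x.
Proof. intros Hx. rewrite <- ln_1. apply ln_le; lra. Qed.

Lemma abc_ap_log_bound (C0 x h m2 e K n1 n2 n3 : R) :
  0 < C0 -> 1 < x -> 1 <= h -> 1 <= e -> 1 <= K -> 0 < m2 ->
  0 < n1 -> 0 < n2 -> 0 < n3 -> n1 <= 2 * x -> n2 <= 2 * x -> n3 <= 2 * x ->
  m2 * m2 <= C0 * Rpower K (1 + 1 / 20) -> K * K <= n1 * n2 * n3 * (e * e) ->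
  x < h * m2 -> 2 * (h * e) <= Rpower x (2 / 10) ->
  ln x < 40 * ln C0.
Proof.
  intros HC0 Hx Hh He HK Hm2 Hn1 Hn2 Hn3 Hn1x Hn2x Hn3x Habc Hrad Hxm2 Hhe.
  assert (Labc : 2 * ln m2 <= ln C0 + (1 + 1 / 20) * ln K).
  { apply ln_le in Habc; [|nra].
    rewrite ln_mult, ln_mult, ln_Rpower in Habc by (unfold Rpower; auto using exp_pos; lra).
    lra. }
  assert (Lrad : 2 * ln K <= ln n1 + ln n2 + ln n3 + 2 * ln e).
  { apply ln_le in Hrad; [|nra].
    rewrite !ln_mult in Hrad by (repeat apply Rmult_lt_0_compat; lra). lra. }
  assert (Ln : forall n, 0 < n -> n <= 2 * x -> ln n <= ln 2 + ln x).
  { intros n Hn Hnx. rewrite <- ln_mult by lra. apply ln_le; lra. }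
  assert (Lx : ln x < ln h + ln m2).
  { rewrite <- ln_mult by lra. apply ln_increasing; lra. }
  assert (Lhe : ln 2 + ln h + ln e <= 2 / 10 * ln x).
  { apply ln_le in Hhe; [|nra].
    rewrite ln_Rpower, !ln_mult in Hhe by (try apply Rmult_lt_0_compat; lra). lra. }
  pose proof (Ln _ Hn1 Hn1x). pose proof (Ln _ Hn2 Hn2x). pose proof (Ln _ Hn3 Hn3x).
  pose proof (ln_ge0 _ He). pose proof (ln_ge0 _ HK).
  pose proof ln_lt_2.
  lra.
Qed.

Theorem mainTheorem8 :
  abc_conjecture ->
  exists C : R, (0 < C)%R /\
    forall x y : R, (C < x)%R -> (1 <= y)%R -> (y <= Rpower x (2 / 10))%R ->
      ~ (exists n1 n2 n3 : Z,
           squarefull n1 /\ squarefull n2 /\ squarefull n3 /\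
           (n1 < n2 < n3)%Z /\
           (x < IZR n1)%R /\ (IZR n1 <= x + y)%R /\
           (x < IZR n2)%R /\ (IZR n2 <= x + y)%R /\
           (x < IZR n3)%R /\ (IZR n3 <= x + y)%R /\
           (n1 + n3 = 2 * n2)%Z).
Proof.
  intros abc. destruct (abc (1 / 20) ltac:(lra)) as [C0 [HC0 Habc]].
  exists (exp (40 * Rabs (ln C0))). split; [apply exp_pos|].
  intros x y Hx Hy1 Hy2 [n1 [n2 [n3 [S1 [S2 [S3 [Hlt [A1 [B1 [A2 [B2 [A3 [B3 Hs]]]]]]]]]]]]].
  assert (Hlnx : 40 * Rabs (ln C0) < ln x).
  { rewrite <- (ln_exp (40 * Rabs (ln C0))). apply ln_increasing; auto using exp_pos. }
  assert (Hx1 : 1 < x).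
  { apply ln_lt_inv; [lra | pose proof (exp_pos (40 * Rabs (ln C0))); lra |].
    rewrite ln_1. pose proof (Rabs_pos (ln C0)). lra. }
  assert (Hyx : y <= x).
  { rewrite <- (Rpower_1 x) by lra. eapply Rle_trans; [exact Hy2|]. apply Rle_Rpower; lra. }
  assert (Hn : forall n, x < IZR n -> IZR n <= x + y -> 0 < IZR n /\ IZR n <= 2 * x)
    by (intros; lra).
  destruct (Hn n1 A1 B1) as [P1 L1], (Hn n2 A2 B2) as [P2 L2], (Hn n3 A3 B3) as [P3 L3].
  destruct (ap_coprime_decomposition n1 n2 n3 (proj1 S1) (proj1 Hlt) Hs)
    as [h [m1 [e [Hh [Hm1 [He [E1 [E2 [E3 Hcop]]]]]]]]].
  set (K := kappa (m1 * (m1 + e + e) * (e * e) * ((m1 + e) * (m1 + e)))%Z).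
  assert (Hprod_pos : (0 < m1 * (m1 + e + e) * (e * e) * ((m1 + e) * (m1 + e)))%Z)
    by (repeat apply Z.mul_pos_pos; lia).
  specialize (Habc (m1 * (m1 + e + e))%Z (e * e)%Z ((m1 + e) * (m1 + e))%Z
                ltac:(ring) (ap_abc_coprime _ _ Hcop) ltac:(lia)).
  assert (Hrad : (K * K <= n1 * n2 * n3 * (e * e))%Z).
  { apply Z.divide_pos_le.
    - destruct S1, S2, S3. repeat apply Z.mul_pos_pos; lia.
    - subst n1 n2 n3. apply squarefull_ap_kappa_sq_divide; auto. }
  enough (ln x < 40 * ln C0) by (pose proof (Rle_abs (ln C0)); lra).
  apply (abc_ap_log_bound C0 x (IZR h) (IZR (m1 + e)) (IZR e) (IZR K) (IZR n1) (IZR n2) (IZR n3));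
    rewrite <- ?mult_IZR; try (apply IZR_le || apply IZR_lt); auto; try lia; try lra.
  - apply kappa_ge1.
  - eapply Rle_trans; [|exact Habc]. apply IZR_le.
    rewrite (Z.abs_eq ((m1 + e) * (m1 + e))) by nia. lia.
  - rewrite <- E2; auto.
  - replace (2 * (h * e))%Z with (n3 - n1)%Z by lia. rewrite minus_IZR. lra.
Qed.
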